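(* Let $A:\mathbb{R}\to\mathbb{R}^{n\times n}$, $t\mapsto A(t)=(a_{kl}(t))$, be a bounded and piecewise continuous function such that for every $t$ the matrix $A(t)$ is Metzler with zero row sums. Consider the linear system $\dot{x}=A(t)x$. Suppose there exist an index $k\in\{1,\dots,n\}$, a threshold $\delta>0$ and an interval length $T>0$ such that for every $t\in\mathbb{R}$, in the $\delta$-digraph associated to the matrix $\int_t^{t+T}A(s)\,\mathrm{d}s$, every node $l\neq k$ can be reached from node $k$. Then the equilibrium set of consensus states $E=\{x\in\mathbb{R}^n: x_1=\dots=x_n\}$ is uniformly exponentially stable for $\dot{x}=A(t)x$. In particular, all components of any solution $\zeta(t)$ of $\dot{x}=A(t)x$ converge to a common value as $t\to\infty$.
   Context: A real square matrix is Metzler if all its off-diagonal entries are nonnegative; it has zero row sums if each of its rows sums to zero (note that the integral over $[t,t+T]$ of such matrices is again Metzler with zero row sums). For $\delta\ge 0$, the $\delta$-digraph associated to an $n\times n$ Metzler matrix $M=(m_{kl})$ with zero row sums is the directed graph with node set $\{1,\dots,n\}$ having an arc from node $l$ to node $k$ ($k\neq l$) if and only if $m_{kl}>\delta$. A node $l$ can be reached from a node $k\neq l$ if there is a directed path from $k$ to $l$ respecting the orientation of the arcs. Uniform exponential stability of $E$ means: there exist constants $c,\lambda>0$ such that for every $t_0\in\mathbb{R}$ and every solution $\zeta$, $\mathrm{dist}(\zeta(t),E)\le c\,e^{-\lambda(t-t_0)}\mathrm{dist}(\zeta(t_0),E)$ for all $t\ge t_0$. *)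

From Stdlib Require Import Reals Lra List Relations.
From Coquelicot Require Import Coquelicot.
Open Scope R_scope.

(* Vectors of R^n are represented as functions nat -> R, matrices as
   nat -> nat -> R; only indices < n are ever used. *)

Fixpoint sumR (n : nat) (f : nat -> R) : R :=
  match n with
  | O => 0
  | S m => sumR m f + f m
  end.

Definition bounded_mat (n : nat) (A : R -> nat -> nat -> R) : Prop :=
  exists M : R, forall t k l, (k < n)%nat -> (l < n)%nat -> Rabs (A t k l) <= M.

Definition piecewise_continuous (n : nat) (A : R -> nat -> nat -> R) : Prop :=
  forall a b : R, exists D : list R,
    forall t, a <= t <= b -> forall k l, (k < n)%nat -> (l < n)%nat ->
      (~ In t D -> continuous (fun s => A s k l) t) /\
      (In t D ->
         (exists v, filterlim (fun s => A s k l) (at_left t) (locally v)) /\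
         (exists v, filterlim (fun s => A s k l) (at_right t) (locally v))).

Definition metzler_zero_row_sums (n : nat) (M : nat -> nat -> R) : Prop :=
  (forall k l, (k < n)%nat -> (l < n)%nat -> k <> l -> 0 <= M k l) /\
  (forall k, (k < n)%nat -> sumR n (fun l => M k l) = 0).

(* arc from node l to node k in the delta-digraph of M *)
Definition delta_arc (n : nat) (delta : R) (M : nat -> nat -> R) (l k : nat) : Prop :=
  (l < n)%nat /\ (k < n)%nat /\ k <> l /\ M k l > delta.

Definition reachable (n : nat) (delta : R) (M : nat -> nat -> R) (k l : nat) : Prop :=
  clos_trans nat (delta_arc n delta M) k l.

Definition int_mat (A : R -> nat -> nat -> R) (t T : R) : nat -> nat -> R :=
  fun k l => RInt (fun s => A s k l) t (t + T).

Definition matvec (n : nat) (M : nat -> nat -> R) (x : nat -> R) (i : nat) : R :=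
  sumR n (fun j => M i j * x j).

(* zeta is a (Caratheodory) solution of x' = A(t) x on [t0, +oo) *)
Definition is_solution_from (n : nat) (A : R -> nat -> nat -> R) (t0 : R)
    (zeta : R -> nat -> R) : Prop :=
  forall t, t0 <= t -> forall i, (i < n)%nat ->
    ex_RInt (fun s => matvec n (A s) (zeta s) i) t0 t /\
    zeta t i = zeta t0 i + RInt (fun s => matvec n (A s) (zeta s) i) t0 t.

Definition dist_E (n : nat) (x : nat -> R) : R :=
  real (Glb_Rbar (fun r => exists c : R,
           r = sqrt (sumR n (fun i => (x i - c) ^ 2)))).

Definition unif_exp_stable_E (n : nat) (A : R -> nat -> nat -> R) : Prop :=
  exists c lam : R, 0 < c /\ 0 < lam /\
    forall (t0 : R) (zeta : R -> nat -> R), is_solution_from n A t0 zeta ->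
      forall t, t0 <= t ->
        dist_E n (zeta t) <= c * exp (- lam * (t - t0)) * dist_E n (zeta t0).

(* Since A(t) has zero row sums, (A x)_i = sum_j a_ij (x_j - x_i) with nonnegative
   off-diagonal weights bounded by L. Hence a lower bound m of all components of a
   solution at some time stays a lower bound later, and each gap x_i - m shrinks at most
   by a fixed factor theta over a window of length T. If the delta-digraph of the
   integral of A over a window [t, t + T] has an arc l -> i and x_l - m >= beta on the
   window, then x_i - m >= r theta beta at its end, for a constant r depending only on
   delta, n L and T. Node k lies in the upper or the lower half of the current range
   [m, M]; since every node is reachable from k, spreading from k along such arcs over
   n consecutive windows moves every component away from that end of the range by the
   fixed fraction (r theta^2)^n / 2 of M - m. So the range contracts geometrically every
   n T time units, which gives uniform exponential stability of the consensus set and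
   convergence of every solution to a consensus value. *)

From Stdlib Require Import Reals Relations Lra Lia List Classical.
From Coquelicot Require Import Coquelicot.
Open Scope R_scope.

Lemma sumR_ext n f g : (forall j, (j < n)%nat -> f j = g j) -> sumR n f = sumR n g.
Proof. induction n; intros H; simpl; auto. rewrite IHn, H; auto. Qed.

Lemma sumR_plus n f g : sumR n (fun j => f j + g j) = sumR n f + sumR n g.
Proof. induction n; simpl; [lra|]. rewrite IHn; lra. Qed.

Lemma sumR_scal n c f : sumR n (fun j => c * f j) = c * sumR n f.
Proof. induction n; simpl; [lra|]. rewrite IHn; lra. Qed.

Lemma sumR_const n c : sumR n (fun _ => c) = INR n * c.
Proof. induction n; simpl sumR; [simpl; lra|]. rewrite IHn, S_INR; lra. Qed.

Lemma sumR_le n f g : (forall j, (j < n)%nat -> f j <= g j) -> sumR n f <= sumR n g.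
Proof. induction n; intros H; simpl; [lra|]. apply Rplus_le_compat; auto. Qed.

Lemma sumR_indicator n l v : (l < n)%nat ->
  sumR n (fun j => if Nat.eq_dec j l then v else 0) = v.
Proof.
  induction n; intros Hl; [lia|]. simpl.
  destruct (Nat.eq_dec n l) as [<-|Hne].
  - rewrite (sumR_ext _ _ (fun _ => 0)), sumR_const; [lra|].
    intros j Hj. destruct (Nat.eq_dec j n); [lia|auto].
  - rewrite IHn; [lra|lia].
Qed.

Lemma sumR_ge_term n f j : (forall i, (i < n)%nat -> 0 <= f i) -> (j < n)%nat ->
  f j <= sumR n f.
Proof.
  induction n; intros Hf Hj; [lia|]. simpl.
  assert (0 <= sumR n f).
  { rewrite <- (Rmult_0_r (INR n)), <- sumR_const. apply sumR_le. intros; apply Hf; lia. }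
  destruct (Nat.eq_dec j n) as [->|Hne]; [lra|].
  assert (f j <= sumR n f) by (apply IHn; [intros; apply Hf|]; lia).
  assert (0 <= f n) by (apply Hf; lia). lra.
Qed.

Lemma pow_le_1 x N : 0 <= x <= 1 -> x ^ N <= 1.
Proof. intros Hx. rewrite <- (pow1 N). apply pow_incr; lra. Qed.

Lemma bernoulli_le z N : 0 <= z <= 1 -> 1 - INR N * z <= (1 - z) ^ N.
Proof.
  intros Hz. induction N; simpl pow; [simpl; lra|]. rewrite S_INR.
  assert (0 <= INR N) by apply pos_INR.
  assert (0 <= (1 - z) ^ N) by (apply pow_le; lra).
  nra.
Qed.

Lemma exp_le_exp x y : x <= y -> exp x <= exp y.
Proof. intros [H| ->]; [left; apply exp_increasing; auto|lra]. Qed.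

Lemma exp_pow_INR a N : exp a ^ N = exp (INR N * a).
Proof.
  induction N as [|N IH]; simpl pow; [rewrite Rmult_0_l, exp_0; auto|].
  rewrite IH, <- exp_plus, S_INR. f_equal; ring.
Qed.

Lemma le_of_le_add_div_INR (y z C : R) (N0 : nat) :
  (forall N : nat, (N0 <= N)%nat -> (0 < N)%nat -> z <= y + C / INR N) -> z <= y.
Proof.
  intros H. apply Rnot_lt_le. intros Hyz.
  destruct (INR_unbounded (C / (z - y))) as [N1 HN1].
  set (N := (N0 + N1 + 1)%nat).
  assert (HN : INR N1 < INR N) by (apply lt_INR; unfold N; lia).
  assert (HN0 : 0 < INR N) by (apply lt_0_INR; unfold N; lia).
  assert (C < (z - y) * INR N).
  { apply (Rmult_lt_compat_l (z - y)) in HN1; [|lra].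
    replace ((z - y) * (C / (z - y))) with C in HN1 by (field; lra). nra. }
  assert (C / INR N < z - y).
  { apply (Rmult_lt_reg_r (INR N)); auto. unfold Rdiv. rewrite Rmult_assoc, Rinv_l; lra. }
  specialize (H N ltac:(unfold N; lia) ltac:(unfold N; lia)). lra.
Qed.

Lemma exists_uniform_bound n (P : nat -> R -> Prop) :
  (forall i K K', K <= K' -> P i K -> P i K') ->
  (forall i, (i < n)%nat -> exists K, P i K) ->
  exists K, 0 <= K /\ forall i, (i < n)%nat -> P i K.
Proof.
  intros Hmono. induction n; intros H.
  - exists 0. split; [lra|]. intros; lia.
  - destruct IHn as [K [HK HKi]]; [intros; apply H; lia|].
    destruct (H n ltac:(lia)) as [Kn HKn].
    exists (Rmax K Kn). split; [apply (Rle_trans _ K); [lra|apply Rmax_l]|].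
    intros i Hi. destruct (Nat.eq_dec i n) as [->|Hne].
    + apply (Hmono _ Kn); auto. apply Rmax_r.
    + apply (Hmono _ K); [apply Rmax_l|]. apply HKi; lia.
Qed.

Lemma exists_argmin_argmax n (v : nat -> R) : (0 < n)%nat ->
  exists j1 j2, (j1 < n)%nat /\ (j2 < n)%nat /\
    forall j, (j < n)%nat -> v j1 <= v j <= v j2.
Proof.
  induction n; intros Hn; [lia|].
  destruct (Nat.eq_dec n 0) as [->|Hn0].
  - exists 0%nat, 0%nat. do 2 (split; [lia|]).
    intros j Hj. replace j with 0%nat by lia. lra.
  - destruct IHn as [j1 [j2 [H1 [H2 H3]]]]; [lia|].
    exists (if Rle_dec (v j1) (v n) then j1 else n), (if Rle_dec (v n) (v j2) then j2 else n).
    split; [destruct (Rle_dec _ _); lia|]. split; [destruct (Rle_dec _ _); lia|].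
    intros j Hj.
    destruct (Nat.eq_dec j n) as [->|Hne];
      [|specialize (H3 j ltac:(lia))];
      destruct (Rle_dec (v j1) (v n)), (Rle_dec (v n) (v j2)); lra.
Qed.

(** * Riemann integrals *)

Lemma is_RInt_affine (f : R -> R) a b al c : ex_RInt f a b ->
  is_RInt (fun s => f s * al - c) a b (RInt f a b * al - c * (b - a)).
Proof.
  intros Ef.
  apply (@is_RInt_ext R_NormedModule (fun s => minus (scal al (f s)) c)).
  { intros s _. change minus with Rminus. change scal with Rmult. simpl. ring. }
  replace (RInt f a b * al - c * (b - a)) with (al * RInt f a b - (b - a) * c) by ring.
  apply (@is_RInt_minus R_NormedModule).
  - apply (@is_RInt_scal R_NormedModule), (@RInt_correct R_CompleteNormedModule), Ef.
  - apply (@is_RInt_const R_NormedModule).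
Qed.

Lemma ex_RInt_one_sided_limits (f : R -> R) a b va vb : a < b ->
  (forall z, a < z < b -> continuous f z) ->
  filterlim f (at_right a) (locally va) -> filterlim f (at_left b) (locally vb) ->
  ex_RInt f a b.
Proof.
  intros Hab Hc Ha Hb.
  destruct (C0_extension_lt f va vb a b Hab Hc Ha Hb) as [g [Hg [Hgf _]]].
  apply (ex_RInt_ext g).
  - intros z Hz. rewrite Rmin_left, Rmax_right in Hz by lra. apply Hgf. lra.
  - apply (@ex_RInt_continuous R_CompleteNormedModule). intros z _. apply Hg.
Qed.

Definition piecewise_continuous_on (f : R -> R) (D : list R) (a b : R) : Prop :=
  forall t, a < t < b ->
    (~ In t D -> continuous f t) /\
    (In t D -> (exists v, filterlim f (at_left t) (locally v)) /\
               (exists v, filterlim f (at_right t) (locally v))).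

Lemma ex_RInt_piecewise (f : R -> R) (D : list R) : forall a b, a <= b ->
  piecewise_continuous_on f D a b ->
  (exists v, filterlim f (at_right a) (locally v)) ->
  (exists v, filterlim f (at_left b) (locally v)) -> ex_RInt f a b.
Proof.
  induction D as [|d D IH]; intros a b Hab H [va Ha] [vb Hb].
  - destruct (Req_dec a b) as [<-|Hne]; [apply ex_RInt_point|].
    apply (ex_RInt_one_sided_limits f a b va vb); auto; [lra|].
    intros z Hz. apply (H z Hz). auto.
  - assert (Hsub : forall a' b', a <= a' -> b' <= b -> ~ (a' < d < b') ->
      piecewise_continuous_on f D a' b').
    { intros a' b' Ha' Hb' Hd t Ht. destruct (H t ltac:(lra)) as [H1 H2]. split.
      - intros Hn. apply H1. intros [->|Hin]; [lra|auto].
      - intros Hin. apply H2. right; auto. }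
    destruct (classic (a < d < b)) as [Hd|Hd].
    + destruct (H d Hd) as [_ [Hl Hr]]; [left; auto|].
      apply (ex_RInt_Chasles f a d b).
      * apply IH; eauto; [lra|]. apply Hsub; lra.
      * apply IH; eauto; [lra|]. apply Hsub; lra.
    + apply IH; eauto. apply Hsub; lra.
Qed.

Lemma ex_RInt_entry n A i j a b : piecewise_continuous n A ->
  (i < n)%nat -> (j < n)%nat -> a <= b -> ex_RInt (fun s => A s i j) a b.
Proof.
  intros Hpc Hi Hj Hab. destruct (Hpc a b) as [D HD].
  assert (Hend : forall t, a <= t <= b ->
    (exists v, filterlim (fun s => A s i j) (at_left t) (locally v)) /\
    (exists v, filterlim (fun s => A s i j) (at_right t) (locally v))).
  { intros t Ht. destruct (HD t Ht i j Hi Hj) as [Hc Hl].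
    destruct (classic (In t D)) as [Hin|Hout]; [auto|].
    split; exists (A t i j);
      (eapply filterlim_filter_le_1; [apply filter_le_within|apply Hc; auto]). }
  apply (ex_RInt_piecewise _ D); auto.
  - intros t Ht. apply HD; auto; lra.
  - apply Hend; lra.
  - apply Hend; lra.
Qed.

(** * Spreading along reachable paths *)

Lemma clos_trans_exit (arc : nat -> nat -> Prop) (P : nat -> Prop) k l :
  clos_trans nat arc k l -> P k -> ~ P l -> exists j i, arc j i /\ P j /\ ~ P i.
Proof.
  induction 1 as [x y Hxy|x y z _ IH1 _ IH2]; intros Hx Hz; [exists x, y; auto|].
  destruct (classic (P y)); [apply IH2|apply IH1]; auto.
Qed.

Lemma NoDup_covers n (Ls : list nat) : NoDup Ls -> (forall j, In j Ls -> (j < n)%nat) ->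
  (n <= length Ls)%nat -> forall j, (j < n)%nat -> In j Ls.
Proof.
  intros HN HS Hl j Hj. apply NNPP. intros Hout.
  assert (X := NoDup_incl_length (NoDup_cons j Hout HN) (l' := seq 0 n)).
  rewrite length_seq in X. simpl in X.
  enough (S (length Ls) <= n)%nat by lia. apply X.
  intros z Hz. apply in_seq. destruct Hz as [<-|Hz]; [lia|]. specialize (HS z Hz). lia.
Qed.

Lemma spread_along_paths n k (arc : nat -> nat -> nat -> Prop) (P : nat -> nat -> Prop) :
  (k < n)%nat ->
  (forall p l, (l < n)%nat -> l <> k -> clos_trans nat (arc p) k l) ->
  (forall p j i, arc p j i -> (i < n)%nat) ->
  P 0%nat k ->
  (forall p j, (j < n)%nat -> P p j -> P (S p) j) ->
  (forall p j i, arc p j i -> P p j -> P (S p) i) ->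
  forall j, (j < n)%nat -> P n j.
Proof.
  intros Hk Hreach Harc H0 Hkeep Hspread.
  assert (Inv : forall p, exists Ls, NoDup Ls /\ In k Ls /\
    (forall j, In j Ls -> (j < n)%nat /\ P p j) /\
    ((S p <= length Ls)%nat \/ forall j, (j < n)%nat -> In j Ls)).
  { induction p as [|p [Ls [HN [HkL [HL Hlen]]]]].
    - exists (k :: nil). split; [repeat constructor; auto|]. split; [left; auto|].
      split; [intros j [<-|[]]; auto|left; auto].
    - destruct (classic (forall j, (j < n)%nat -> In j Ls)) as [Hall|Hnall].
      + exists Ls. do 2 (split; auto). split; [|right; auto].
        intros j Hj. destruct (HL j Hj). auto.
      + apply not_all_ex_not in Hnall as [l Hl]. apply imply_to_and in Hl as [Hln Hout].
        destruct (clos_trans_exit (arc p) (fun j => In j Ls) k l)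
          as [j [i [Hji [HjL HiL]]]]; auto.
        { apply Hreach; auto. intros ->; auto. }
        exists (i :: Ls). split; [constructor; auto|]. split; [right; auto|]. split.
        * intros z [<-|Hz]; [split; [eapply Harc; eauto|apply (Hspread p j); auto]|].
          { apply HL; auto. }
          destruct (HL z Hz). auto.
        * destruct Hlen as [Hlen|Hlen]; [left; simpl; lia|].
          exfalso. apply Hout, Hlen, Hln. }
  destruct (Inv n) as [Ls [HN [_ [HL Hlen]]]]. intros j Hj.
  apply HL. destruct Hlen as [Hlen|Hlen]; [|auto].
  apply (NoDup_covers n Ls HN); [apply HL|lia|auto].
Qed.

Section Solutions.

Variables (n : nat) (A : R -> nat -> nat -> R) (t0 : R) (x : R -> nat -> R).
Hypothesis x_sol : is_solution_from n A t0 x.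

Lemma solution_increment p q i : t0 <= p <= q -> (i < n)%nat ->
  ex_RInt (fun s => matvec n (A s) (x s) i) p q /\
  x q i - x p i = RInt (fun s => matvec n (A s) (x s) i) p q.
Proof.
  intros Hpq Hi.
  destruct (x_sol q ltac:(lra) i Hi) as [Eq Xq].
  destruct (x_sol p ltac:(lra) i Hi) as [Ep Xp].
  assert (Epq : ex_RInt (fun s => matvec n (A s) (x s) i) p q)
    by (apply (@ex_RInt_Chasles_2 R_CompleteNormedModule _ t0); [lra|exact Eq]).
  split; auto.
  rewrite Xq, Xp, <- (@RInt_Chasles R_CompleteNormedModule _ t0 p q); auto.
  change plus with Rplus. ring.
Qed.

Lemma is_RInt_le_increment g p q Ig i : t0 <= p <= q -> (i < n)%nat -> is_RInt g p q Ig ->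
  (forall u, p <= u <= q -> g u <= matvec n (A u) (x u) i) ->
  Ig <= x q i - x p i.
Proof.
  intros Hpq Hi Ig_g Hg. destruct (solution_increment p q i Hpq Hi) as [Ex ->].
  apply (is_RInt_le g (fun s => matvec n (A s) (x s) i) p q); [lra|auto| |].
  - apply (@RInt_correct R_CompleteNormedModule), Ex.
  - intros u Hu. apply Hg. lra.
Qed.

Lemma solution_lipschitz S : t0 <= S -> exists K, 0 <= K /\
  forall i, (i < n)%nat -> forall p q, t0 <= p <= q -> q <= S ->
    Rabs (x q i - x p i) <= K * (q - p).
Proof.
  intros HS.
  destruct (exists_uniform_bound n
    (fun i K => forall u, t0 <= u <= S -> Rabs (matvec n (A u) (x u) i) <= K))
    as [K [HK HKi]].
  { intros i K K' HKK' HP u Hu. apply (Rle_trans _ K); auto. }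
  { intros i Hi. destruct (x_sol S HS i Hi) as [E _].
    destruct (ex_RInt_ub _ _ _ E) as [M HM]. exists M. intros u Hu.
    apply HM. rewrite Rmin_left, Rmax_right; lra. }
  exists K. split; auto. intros i Hi p q Hpq HqS.
  destruct (solution_increment p q i ltac:(lra) Hi) as [Ex ->].
  rewrite Rmult_comm. apply abs_RInt_le_const; [lra|auto|].
  intros u Hu. apply HKi; auto; lra.
Qed.

End Solutions.

Lemma solution_opp n A t0 x : is_solution_from n A t0 x ->
  is_solution_from n A t0 (fun t j => - x t j).
Proof.
  intros H t Ht i Hi. destruct (H t Ht i Hi) as [E X].
  assert (Eq : forall s, matvec n (A s) (fun j => - x s j) i = opp (matvec n (A s) (x s) i)).
  { intros s. unfold matvec. change opp with Ropp.
    rewrite (sumR_ext _ _ (fun j => -1 * (A s i j * x s j))), sumR_scal; [ring|].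
    intros; ring. }
  split.
  - apply (ex_RInt_ext (fun s => opp (matvec n (A s) (x s) i))); [intros; auto|].
    apply (@ex_RInt_opp R_CompleteNormedModule). exact E.
  - rewrite (@RInt_ext R_CompleteNormedModule _ (fun s => opp (matvec n (A s) (x s) i))),
      (@RInt_opp R_CompleteNormedModule), X by auto. change opp with Ropp. ring.
Qed.

(** * Consensus dynamics *)

Definition window_decay (n : nat) (x : R -> nat -> R) (t0 T theta : R) : Prop :=
  forall a m, t0 <= a -> (forall j, (j < n)%nat -> m <= x a j) ->
  forall i s, (i < n)%nat -> a <= s <= a + T -> theta * (x a i - m) <= x s i - m.

Definition range_contracts (n : nat) (x : R -> nat -> R) (t0 g W : R) : Prop :=
  forall a m M, t0 <= a -> (forall j, (j < n)%nat -> m <= x a j <= M) ->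
  forall q : nat, exists m' M', m <= m' /\ M' <= M /\ M' - m' <= (1 - g) ^ q * (M - m) /\
    forall s, a + INR q * W <= s -> forall j, (j < n)%nat -> m' <= x s j <= M'.

Section ConsensusDynamics.

Variables (n : nat) (A : R -> nat -> nat -> R) (L : R).
Hypothesis L_ge0 : 0 <= L.
Hypothesis A_le : forall t i j, (i < n)%nat -> (j < n)%nat -> Rabs (A t i j) <= L.
Hypothesis A_metzler : forall t, metzler_zero_row_sums n (A t).

Lemma rate_ge0 : 0 <= INR n * L.
Proof. apply Rmult_le_pos; [apply pos_INR|auto]. Qed.

Lemma matvec_differences s v i : (i < n)%nat ->
  matvec n (A s) v i = sumR n (fun j => A s i j * (v j - v i)).
Proof.
  intros Hi. destruct (A_metzler s) as [_ Hrow].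
  transitivity (sumR n (fun j => A s i j * v j) + - v i * sumR n (fun j => A s i j)).
  - rewrite Hrow; auto. unfold matvec; ring.
  - rewrite <- sumR_scal, <- sumR_plus. apply sumR_ext; intros; ring.
Qed.

Lemma offdiag_bounds s i j : (i < n)%nat -> (j < n)%nat -> i <> j -> 0 <= A s i j <= L.
Proof.
  intros Hi Hj Hij. split; [apply (proj1 (A_metzler s)); auto|].
  assert (HL := A_le s i j Hi Hj). apply Rabs_le_between in HL. lra.
Qed.

Lemma matvec_ge_gain s v i l eta al : (i < n)%nat -> (l < n)%nat -> 0 <= eta -> 0 <= al ->
  (forall j, (j < n)%nat -> - eta <= v j - v i) -> al <= v l - v i ->
  A s i l * al - INR n * L * eta <= matvec n (A s) v i.
Proof.
  intros Hi Hl He Ha Hv Hvl. rewrite matvec_differences by auto.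
  replace (A s i l * al - INR n * L * eta) with
    (sumR n (fun j => - (L * eta) + (if Nat.eq_dec j l then A s i l * al else 0)))
    by (rewrite sumR_plus, sumR_const, sumR_indicator; auto; ring).
  apply sumR_le. intros j Hj. specialize (Hv j Hj).
  destruct (Nat.eq_dec i j) as [<-|Hij].
  - replace (v i - v i) with 0 by ring.
    destruct (Nat.eq_dec i l) as [<-|]; [replace al with 0 by lra|]; nra.
  - destruct (offdiag_bounds s i j Hi Hj Hij).
    destruct (Nat.eq_dec j l) as [->|]; nra.
Qed.

Section Solution.

Variables (t0 : R) (x : R -> nat -> R).
Hypothesis x_sol : is_solution_from n A t0 x.

Section Lipschitz.

Variables (S K : R).
Hypothesis K_ge0 : 0 <= K.
Hypothesis x_lip : forall i, (i < n)%nat -> forall p q, t0 <= p <= q -> q <= S ->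
  Rabs (x q i - x p i) <= K * (q - p).

(* Freezing the state over a step of length h perturbs the differences x_j - x_i by
   O(K h), hence the increment of x_i by O(h^2); over tau / h steps the error is O(tau h),
   which vanishes as h -> 0 in lower_envelope. *)
Lemma step_estimate u h m i : t0 <= u -> 0 <= h -> u + h <= S -> INR n * L * h <= 1 ->
  (i < n)%nat -> (forall j, (j < n)%nat -> m <= x u j) ->
  (1 - INR n * L * h) * (x u i - m) - 2 * INR n * L * K * h ^ 2 <= x (u + h) i - m.
Proof.
  intros Hu Hh HS Hch Hi Hm.
  assert (Hc := rate_ge0).
  set (eta := x u i - m + 2 * K * h).
  assert (Hlip : forall j w, (j < n)%nat -> u <= w <= u + h -> Rabs (x w j - x u j) <= K * h).
  { intros j w Hj Hw. apply (Rle_trans _ (K * (w - u))); [apply x_lip; auto; lra|nra]. }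
  assert (Hinc : h * - (INR n * L * eta) <= x (u + h) i - x u i).
  { replace h with (u + h - u) at 1 by ring.
    apply (is_RInt_le_increment n A t0 x x_sol (fun _ => - (INR n * L * eta)));
      auto; [lra|apply (@is_RInt_const R_NormedModule)|].
    intros w Hw.
    replace (- (INR n * L * eta)) with (A w i i * 0 - INR n * L * eta) by ring.
    apply matvec_ge_gain; auto; [unfold eta; specialize (Hm i Hi); nra|lra| |lra].
    intros j Hj.
    assert (Hwj := Hlip j w Hj Hw). assert (Hwi := Hlip i w Hi Hw).
    apply Rabs_le_between in Hwj, Hwi. specialize (Hm j Hj). unfold eta. lra. }
  unfold eta in Hinc. nra.
Qed.

Lemma iterate_estimate a h m : t0 <= a -> 0 <= h -> INR n * L * h <= 1 ->
  (forall j, (j < n)%nat -> m <= x a j) ->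
  forall N : nat, a + INR N * h <= S -> forall i, (i < n)%nat ->
  (1 - INR n * L * h) ^ N * (x a i - m) - INR N * (2 * INR n * L * K * h ^ 2)
    <= x (a + INR N * h) i - m.
Proof.
  intros Ha Hh Hch Hm. assert (Hc := rate_ge0).
  set (E := 2 * INR n * L * K * h ^ 2).
  assert (HE : 0 <= E).
  { assert (0 <= INR n * L * K) by (apply Rmult_le_pos; auto).
    assert (0 <= h ^ 2) by apply pow2_ge_0. unfold E. nra. }
  induction N as [|N IH]; intros HN i Hi.
  - simpl. replace (a + 0 * h) with a by ring. lra.
  - assert (0 <= INR N) by apply pos_INR. rewrite S_INR in *.
    replace (a + (INR N + 1) * h) with ((a + INR N * h) + h) by ring.
    specialize (IH ltac:(lra)).
    assert (Hfloor : forall j, (j < n)%nat -> m - INR N * E <= x (a + INR N * h) j).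
    { intros j Hj. specialize (IH j Hj).
      assert (0 <= (1 - INR n * L * h) ^ N) by (apply pow_le; lra).
      specialize (Hm j Hj). nra. }
    assert (Hstep := step_estimate (a + INR N * h) h (m - INR N * E) i
      ltac:(nra) Hh ltac:(lra) Hch Hi Hfloor).
    assert (Hmul := Rmult_le_compat_l (1 - INR n * L * h) _ _ ltac:(lra) (IH i Hi)).
    simpl pow. fold E in Hstep. nra.
Qed.

End Lipschitz.

Lemma lower_envelope a m tau i : t0 <= a -> 0 <= tau -> (i < n)%nat ->
  (forall j, (j < n)%nat -> m <= x a j) ->
  Rmax 0 (1 - INR n * L * tau) * (x a i - m) <= x (a + tau) i - m.
Proof.
  intros Ha Ht Hi Hm. assert (Hc := rate_ge0).
  destruct (solution_lipschitz n A t0 x x_sol (a + tau) ltac:(lra)) as [K [HK Hlip]].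
  destruct (INR_unbounded (INR n * L * tau)) as [N0 HN0].
  apply (le_of_le_add_div_INR _ _ (2 * INR n * L * K * tau ^ 2) N0).
  intros N HN HNpos.
  assert (HNR : 0 < INR N) by (apply lt_0_INR; lia).
  assert (HN0N : INR N0 <= INR N) by (apply le_INR; lia).
  set (h := tau / INR N).
  assert (Hh : INR N * h = tau) by (unfold h; field; lra).
  assert (Hh0 : 0 <= h) by (unfold h; apply Rdiv_le_0_compat; lra).
  assert (Hch : INR n * L * h <= 1).
  { apply (Rmult_le_reg_l (INR N)); auto. rewrite Rmult_1_r.
    replace (INR N * (INR n * L * h)) with (INR n * L * (INR N * h)) by ring. rewrite Hh. lra. }
  assert (Hit := iterate_estimate (a + tau) K HK Hlip a h m Ha Hh0 Hch Hm N
    ltac:(rewrite Hh; lra) i Hi).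
  rewrite Hh in Hit.
  assert (Hfac : Rmax 0 (1 - INR n * L * tau) <= (1 - INR n * L * h) ^ N).
  { apply Rmax_lub; [apply pow_le; lra|].
    replace (INR n * L * tau) with (INR N * (INR n * L * h)) by (rewrite <- Hh; ring).
    apply bernoulli_le. split; [nra|auto]. }
  assert (Herr : INR N * (2 * INR n * L * K * h ^ 2) = 2 * INR n * L * K * tau ^ 2 / INR N)
    by (rewrite <- Hh; field; lra).
  specialize (Hm i Hi).
  assert (Rmax 0 (1 - INR n * L * tau) * (x a i - m) <= (1 - INR n * L * h) ^ N * (x a i - m))
    by (apply Rmult_le_compat_r; lra).
  lra.
Qed.

Lemma lower_bound_forward a m : t0 <= a -> (forall j, (j < n)%nat -> m <= x a j) ->
  forall s j, a <= s -> (j < n)%nat -> m <= x s j.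
Proof.
  intros Ha Hm s j Hs Hj.
  assert (H := lower_envelope a m (s - a) j Ha ltac:(lra) Hj Hm).
  replace (a + (s - a)) with s in H by ring.
  assert (0 <= Rmax 0 (1 - INR n * L * (s - a))) by apply Rmax_l.
  specialize (Hm j Hj). nra.
Qed.

Lemma window_decay_halving h0 N : 0 < h0 -> INR n * L * h0 <= 1 / 2 ->
  window_decay n x t0 (INR N * h0) ((1 / 2) ^ N).
Proof.
  intros Hh0 Hch a m Ha Hm i s Hi. assert (Hc := rate_ge0).
  assert (Hmi : m <= x a i) by auto.
  revert s. induction N as [|N IH]; intros s Hs.
  - simpl in *. replace s with a by lra. lra.
  - rewrite S_INR in Hs. assert (0 <= INR N) by apply pos_INR.
    assert (0 <= (1 / 2) ^ N) by (apply pow_le; lra).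
    simpl pow.
    destruct (Rle_dec s (a + INR N * h0)) as [Hle|Hgt].
    + specialize (IH s ltac:(lra)). nra.
    + set (a' := a + INR N * h0).
      assert (Hm' : forall j, (j < n)%nat -> m <= x a' j).
      { intros j Hj. apply (lower_bound_forward a m); auto. unfold a'; nra. }
      assert (Hnow := lower_envelope a' m (s - a') i ltac:(unfold a'; nra)
        ltac:(unfold a' in *; lra) Hi Hm').
      replace (a' + (s - a')) with s in Hnow by ring.
      assert (1 / 2 <= Rmax 0 (1 - INR n * L * (s - a'))).
      { eapply Rle_trans; [|apply Rmax_r]. unfold a' in *. nra. }
      assert (Hprev := IH a' ltac:(unfold a'; nra)).
      assert (0 <= x a' i - m) by (specialize (Hm' i Hi); lra).
      nra.
Qed.

End Solution.

Lemma upper_bound_forward t0 x a M : is_solution_from n A t0 x -> t0 <= a ->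
  (forall j, (j < n)%nat -> x a j <= M) -> forall s j, a <= s -> (j < n)%nat -> x s j <= M.
Proof.
  intros Hx Ha HM s j Hs Hj.
  enough (- M <= - x s j) by lra.
  apply (lower_bound_forward t0 (fun t j => - x t j) (solution_opp n A t0 x Hx) a); auto.
  intros j' Hj'. specialize (HM j' Hj'). lra.
Qed.

Lemma exists_window_decay T : exists theta, 0 < theta <= 1 /\
  forall t0 x, is_solution_from n A t0 x -> window_decay n x t0 T theta.
Proof.
  assert (Hc := rate_ge0).
  set (h0 := / (2 * (INR n * L + 1))).
  assert (Hh0 : 0 < h0) by (apply Rinv_0_lt_compat; lra).
  assert (Hch : INR n * L * h0 <= 1 / 2).
  { unfold h0. apply (Rmult_le_reg_r (2 * (INR n * L + 1))); [lra|].
    rewrite Rmult_assoc, Rinv_l; lra. }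
  destruct (INR_unbounded (T / h0)) as [N HN].
  assert (HT : T <= INR N * h0).
  { apply (Rmult_lt_compat_r h0) in HN; auto. unfold Rdiv in HN.
    rewrite Rmult_assoc, Rinv_l in HN; lra. }
  exists ((1 / 2) ^ N). split; [split; [apply pow_lt|apply pow_le_1]; lra|].
  intros t0 x Hx a m Ha Hm i s Hi Hs.
  apply (window_decay_halving t0 x Hx h0 N Hh0 Hch a m Ha Hm i s Hi). lra.
Qed.

Section Contraction.

Variables (k : nat) (delta T theta r : R).
Hypothesis A_pc : piecewise_continuous n A.
Hypothesis k_lt : (k < n)%nat.
Hypothesis T_pos : 0 < T.
Hypothesis theta_bounds : 0 < theta <= 1.
Hypothesis decay_window : forall t0 x, is_solution_from n A t0 x -> window_decay n x t0 T theta.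
Hypothesis r_pos : 0 < r.
Hypothesis r_le_half : r <= 1 / 2.
Hypothesis r_le_delta : r <= delta / 2.
Hypothesis r_lift : r * (delta + INR n * L * T) <= delta / 2.
Hypothesis reach : forall t l, (l < n)%nat -> l <> k -> reachable n delta (int_mat A t T) k l.

Section Solution.

Variables (t0 : R) (x : R -> nat -> R).
Hypothesis x_sol : is_solution_from n A t0 x.

Lemma lift_across_arc p m i l beta : t0 <= p -> (i < n)%nat -> (l < n)%nat ->
  (forall j, (j < n)%nat -> m <= x p j) ->
  delta < int_mat A p T i l -> 0 <= beta ->
  (forall u, p <= u <= p + T -> beta <= x u l - m) ->
  r * theta * beta <= x (p + T) i - m.
Proof.
  intros Hp Hi Hl Hm Hint Hb Hxl.
  assert (Hc := rate_ge0).
  assert (Hlb := lower_bound_forward t0 x x_sol p m Hp Hm).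
  set (rho := r * beta).
  (* Either x_i already exceeds m + rho in the window and then decays at most by theta,
     or it stays below and the arc l -> i pulls it up by (beta - rho) delta - n L rho T. *)
  destruct (classic (exists u, p <= u <= p + T /\ rho < x u i - m)) as [[u [Hu Hxu]]|Hno].
  - assert (Hd := decay_window t0 x x_sol u m ltac:(lra)
      ltac:(intros j Hj; apply Hlb; auto; lra) i (p + T) Hi ltac:(lra)).
    unfold rho in Hxu. nra.
  - assert (Hle : forall u, p <= u <= p + T -> x u i - m <= rho).
    { intros u Hu. apply Rnot_lt_le. intros Hlt. apply Hno. eauto. }
    assert (Hrho : 0 <= rho <= beta / 2) by (unfold rho; split; nra).
    assert (Hg := is_RInt_affine (fun s => A s i l) p (p + T) (beta - rho) (INR n * L * rho)
      (ex_RInt_entry n A i l p (p + T) A_pc Hi Hl ltac:(lra))).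
    assert (Hinc := is_RInt_le_increment n A t0 x x_sol _ p (p + T) _ i ltac:(lra) Hi Hg).
    fold (int_mat A p T i l) in Hinc.
    assert (Hgain : (beta - rho) * delta <= (beta - rho) * int_mat A p T i l)
      by (apply Rmult_le_compat_l; lra).
    assert (Hloss : beta * (r * (delta + INR n * L * T)) <= beta * (delta / 2))
      by (apply Rmult_le_compat_l; lra).
    assert (Hfin : beta * (r * theta) <= beta * (delta / 2))
      by (apply Rmult_le_compat_l; nra).
    assert (Hmp : m <= x p i) by auto.
    enough (beta * delta - rho * (delta + INR n * L * T) <= x (p + T) i - m)
      by (unfold rho in *; nra).
    replace (p + T - p) with T in Hinc by ring.
    enough (int_mat A p T i l * (beta - rho) - INR n * L * rho * T <= x (p + T) i - x p i)
      by nra.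
    apply Hinc. intros u Hu.
    specialize (Hle u Hu).
    apply matvec_ge_gain; auto; try lra.
    + intros j Hj. assert (m <= x u j) by (apply Hlb; auto; lra). lra.
    + specialize (Hxl u Hu). lra.
Qed.

Lemma spread_from_upper_half a m M : t0 <= a -> (forall j, (j < n)%nat -> m <= x a j <= M) ->
  (m + M) / 2 <= x a k ->
  forall j, (j < n)%nat -> (r * theta ^ 2) ^ n / 2 * (M - m) <= x (a + INR n * T) j - m.
Proof.
  intros Ha Hb Hk.
  assert (Hlb : forall s j, a <= s -> (j < n)%nat -> m <= x s j)
    by (apply (lower_bound_forward t0 x x_sol a m Ha); intros j Hj; apply Hb; auto).
  assert (HmM : m <= M) by (destruct (Hb k k_lt); lra).
  set (kappa := r * theta ^ 2).
  assert (Hkappa : 0 <= kappa <= theta) by (unfold kappa; split; nra).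
  assert (Hwin : forall p : nat, t0 <= a + INR p * T /\ a <= a + INR p * T)
    by (intros p; assert (0 <= INR p) by apply pos_INR; split; nra).
  assert (Hnext : forall p : nat, a + INR (S p) * T = (a + INR p * T) + T)
    by (intros p; rewrite S_INR; ring).
  apply (spread_along_paths n k (fun p => delta_arc n delta (int_mat A (a + INR p * T) T))
    (fun p j => kappa ^ p / 2 * (M - m) <= x (a + INR p * T) j - m)).
  - exact k_lt.
  - intros p. apply reach.
  - intros p j i (_ & Hi & _). exact Hi.
  - simpl. replace (a + 0 * T) with a by ring. lra.
  - intros p j Hj Hp. rewrite Hnext.
    destruct (Hwin p) as [Hw Haw].
    assert (Hd := decay_window t0 x x_sol (a + INR p * T) m Hw
      ltac:(intros j' Hj'; apply Hlb; auto) j (a + INR p * T + T) Hj ltac:(lra)).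
    assert (0 <= kappa ^ p / 2 * (M - m))
      by (assert (0 <= kappa ^ p) by (apply pow_le; lra); nra).
    simpl pow. nra.
  - intros p j i (Hj & Hi & Hij & Harc) Hp. rewrite Hnext.
    destruct (Hwin p) as [Hw Haw].
    assert (0 <= kappa ^ p / 2 * (M - m))
      by (assert (0 <= kappa ^ p) by (apply pow_le; lra); nra).
    replace (kappa ^ S p / 2 * (M - m)) with (r * theta * (theta * (kappa ^ p / 2 * (M - m))))
      by (simpl pow; generalize (kappa ^ p); intro; unfold kappa; field).
    apply (lift_across_arc (a + INR p * T) m i j _ Hw Hi Hj);
      [intros; apply Hlb; auto|lra|nra|].
    intros u Hu.
    assert (Hd := decay_window t0 x x_sol (a + INR p * T) m Hw
      ltac:(intros j' Hj'; apply Hlb; auto) j u Hj Hu).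
    nra.
Qed.

End Solution.

Lemma range_contraction_step t0 x a m M : is_solution_from n A t0 x -> t0 <= a ->
  (forall j, (j < n)%nat -> m <= x a j <= M) ->
  exists m' M', m <= m' /\ M' <= M /\ M' - m' <= (1 - (r * theta ^ 2) ^ n / 2) * (M - m) /\
    forall j, (j < n)%nat -> m' <= x (a + INR n * T) j <= M'.
Proof.
  intros Hx Ha Hb.
  set (g := (r * theta ^ 2) ^ n / 2).
  assert (HmM : m <= M) by (destruct (Hb k k_lt); lra).
  assert (Hg : 0 <= g * (M - m)).
  { assert (0 <= (r * theta ^ 2) ^ n) by (apply pow_le; nra). unfold g. nra. }
  assert (Hs : a <= a + INR n * T) by (assert (0 <= INR n) by apply pos_INR; nra).
  (* In the lower-half case, x_k is in the upper half of [- M, - m] for the solution - x. *)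
  destruct (Rle_dec ((m + M) / 2) (x a k)) as [Hup|Hlow].
  - exists (m + g * (M - m)), M. do 3 (split; [lra|]).
    intros j Hj. split.
    + assert (H := spread_from_upper_half t0 x Hx a m M Ha Hb Hup j Hj). fold g in H. lra.
    + apply (upper_bound_forward t0 x a M Hx Ha); auto. intros; apply Hb; auto.
  - assert (H := spread_from_upper_half t0 (fun t j => - x t j) (solution_opp n A t0 x Hx)
      a (- M) (- m) Ha ltac:(intros j Hj; specialize (Hb j Hj); lra) ltac:(lra)).
    exists m, (M - g * (M - m)). do 3 (split; [lra|]).
    intros j Hj. split.
    + apply (lower_bound_forward t0 x Hx a m Ha); auto. intros; apply Hb; auto.
    + specialize (H j Hj). fold g in H. lra.
Qed.

Lemma solution_range_contracts t0 x : is_solution_from n A t0 x ->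
  range_contracts n x t0 ((r * theta ^ 2) ^ n / 2) (INR n * T).
Proof.
  intros Hx a m M Ha Hb q.
  set (g := (r * theta ^ 2) ^ n / 2).
  assert (Hg : 0 <= g <= 1).
  { assert (0 <= r * theta ^ 2 <= 1) by (split; nra).
    assert (0 <= (r * theta ^ 2) ^ n <= 1) by (split; [apply pow_le|apply pow_le_1]; lra).
    unfold g. lra. }
  assert (HW : 0 <= INR n * T) by (assert (0 <= INR n) by apply pos_INR; nra).
  induction q as [|q (m1 & M1 & H1 & H2 & H3 & H4)].
  - exists m, M. do 3 (split; [simpl; lra|]).
    intros s Hs j Hj. simpl in Hs. split.
    + apply (lower_bound_forward t0 x Hx a m Ha); auto; [intros; apply Hb; auto|lra].
    + apply (upper_bound_forward t0 x a M Hx Ha); auto; [intros; apply Hb; auto|lra].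
  - assert (0 <= INR q) by apply pos_INR.
    set (a1 := a + INR q * (INR n * T)).
    destruct (range_contraction_step t0 x a1 m1 M1 Hx ltac:(unfold a1; nra)
      ltac:(intros j Hj; apply H4; [unfold a1; lra|auto])) as (m2 & M2 & G1 & G2 & G3 & G4).
    exists m2, M2. do 2 (split; [lra|]). split.
    + simpl pow. fold g in G3.
      assert (0 <= 1 - g) by lra. nra.
    + intros s Hs j Hj. rewrite S_INR in Hs. split.
      * apply (lower_bound_forward t0 x Hx (a1 + INR n * T) m2); auto;
          [unfold a1; nra|intros; apply G4; auto|unfold a1 in *; lra].
      * apply (upper_bound_forward t0 x (a1 + INR n * T) M2 Hx); auto;
          [unfold a1; nra|intros; apply G4; auto|unfold a1 in *; lra].
Qed.

End Contraction.

End ConsensusDynamics.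

(** * Distance to the consensus set *)

Lemma dist_E_glb n v :
  (forall c, dist_E n v <= sqrt (sumR n (fun i => (v i - c) ^ 2))) /\
  (forall d, (forall c, d <= sqrt (sumR n (fun i => (v i - c) ^ 2))) -> d <= dist_E n v).
Proof.
  set (Dist := fun r => exists c : R, r = sqrt (sumR n (fun i => (v i - c) ^ 2))).
  destruct (Glb_Rbar_correct Dist) as [Hlow Hgreat].
  unfold dist_E. fold Dist.
  destruct (Glb_Rbar Dist) as [l| |] eqn:Hl; simpl in *.
  - split.
    + intros c. apply (Hlow (sqrt _)). exists c; auto.
    + intros d Hd. apply (Hgreat d). intros r [c ->]. apply Hd.
  - exfalso. apply (Hlow (sqrt (sumR n (fun i => (v i - 0) ^ 2)))). exists 0; auto.
  - exfalso. apply (Hgreat 0). intros r [c ->]. apply sqrt_pos.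
Qed.

Lemma dist_E_le_width n v m M : m <= M -> (forall i, (i < n)%nat -> m <= v i <= M) ->
  dist_E n v <= sqrt (INR n) * (M - m).
Proof.
  intros HmM Hv. eapply Rle_trans; [apply (proj1 (dist_E_glb n v) m)|].
  rewrite <- (sqrt_pow2 (M - m)), <- sqrt_mult_alt by (apply pos_INR || lra).
  apply sqrt_le_1_alt. rewrite <- sumR_const. apply sumR_le. intros i Hi.
  specialize (Hv i Hi). apply pow_incr. lra.
Qed.

Lemma width_le_dist_E n v j1 j2 : (j1 < n)%nat -> (j2 < n)%nat ->
  v j2 - v j1 <= 2 * dist_E n v.
Proof.
  intros H1 H2.
  enough ((v j2 - v j1) / 2 <= dist_E n v) by lra.
  apply (proj2 (dist_E_glb n v)). intros c.
  assert (Hterm : forall j, (j < n)%nat ->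
    Rabs (v j - c) <= sqrt (sumR n (fun i => (v i - c) ^ 2))).
  { intros j Hj. rewrite <- (sqrt_pow2 (Rabs (v j - c))) by apply Rabs_pos.
    apply sqrt_le_1_alt. rewrite pow2_abs.
    apply (sumR_ge_term n (fun i => (v i - c) ^ 2)); auto. intros; apply pow2_ge_0. }
  assert (Hj1 := Hterm j1 H1). assert (Hj2 := Hterm j2 H2).
  apply Rabs_le_between in Hj1, Hj2. lra.
Qed.

Lemma range_contracts_converges n x t0 g W : (0 < n)%nat -> 0 < g <= 1 -> 0 < W ->
  range_contracts n x t0 g W ->
  exists v, forall i, (i < n)%nat ->
    filterlim (fun t => x t i) (Rbar_locally p_infty) (locally v).
Proof.
  intros Hn Hg HW Hcontr.
  destruct (exists_argmin_argmax n (x t0) Hn) as (j1 & j2 & Hj1 & Hj2 & Hb0).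
  set (m0 := x t0 j1). set (M0 := x t0 j2).
  assert (HmM : m0 <= M0) by (destruct (Hb0 j1 Hj1); auto).
  set (Floors := fun r => exists s, t0 <= s /\
    forall u, s <= u -> forall j, (j < n)%nat -> r <= x u j).
  assert (Hbound : bound Floors).
  { destruct (Hcontr t0 m0 M0 (Rle_refl _) Hb0 0%nat) as (m' & M' & _ & HM' & _ & Hs).
    exists M0. intros r (s & Hs0 & Hr). specialize (Hr s (Rle_refl _) j1 Hj1).
    destruct (Hs s ltac:(simpl; lra) j1 Hj1). lra. }
  assert (Hne : exists r, Floors r).
  { exists m0, t0. split; [lra|]. intros u Hu j Hj.
    destruct (Hcontr t0 m0 M0 (Rle_refl _) Hb0 0%nat) as (m' & M' & Hm' & _ & _ & Hs).
    destruct (Hs u ltac:(simpl; lra) j Hj). lra. }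
  destruct (completeness Floors Hbound Hne) as [v [Hub Hlub]].
  exists v. intros i Hi. apply filterlim_locally. intros eps.
  assert (Heps : 0 < eps / (M0 - m0 + 1)) by (apply Rdiv_lt_0_compat; [apply cond_pos|lra]).
  destruct (pow_lt_1_zero (1 - g) ltac:(rewrite Rabs_right; lra) _ Heps) as [N HN].
  specialize (HN N (le_n _)). rewrite Rabs_right in HN by (apply Rle_ge, pow_le; lra).
  destruct (Hcontr t0 m0 M0 (Rle_refl _) Hb0 N) as (m' & M' & H1 & H2 & H3 & H4).
  assert (0 <= INR N) by apply pos_INR.
  assert (Hm' : m' <= v).
  { apply Hub. exists (t0 + INR N * W). split; [nra|]. intros u Hu j Hj. apply (H4 u Hu j Hj). }
  assert (HM' : v <= M').
  { apply Hlub. intros r (s & Hs & Hr). set (u := Rmax s (t0 + INR N * W)).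
    specialize (Hr u (Rmax_l _ _) j1 Hj1). destruct (H4 u (Rmax_r _ _) j1 Hj1). lra. }
  assert (Hsmall : M' - m' < eps).
  { assert (0 <= (1 - g) ^ N) by (apply pow_le; lra).
    assert ((1 - g) ^ N * (M0 - m0 + 1) < eps).
    { apply (Rmult_lt_compat_r (M0 - m0 + 1)) in HN; [|lra].
      unfold Rdiv in HN. rewrite Rmult_assoc, Rinv_l in HN by lra. lra. }
    nra. }
  exists (t0 + INR N * W). intros u Hu.
  change (Rabs (x u i - v) < eps). destruct (H4 u ltac:(lra) i Hi). apply Rabs_lt_between. lra.
Qed.

Lemma range_contracts_exp_decay n x t0 g W : (0 < n)%nat -> 0 < g <= 1 -> 0 < W ->
  range_contracts n x t0 g W -> forall t, t0 <= t ->
  dist_E n (x t) <= 2 * sqrt (INR n) * exp g * exp (- (g / W) * (t - t0)) * dist_E n (x t0).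
Proof.
  intros Hn Hg HW Hcontr t Ht.
  destruct (exists_argmin_argmax n (x t0) Hn) as (j1 & j2 & Hj1 & Hj2 & Hb0).
  assert (HmM : x t0 j1 <= x t0 j2) by (destruct (Hb0 j1 Hj1); auto).
  destruct (nfloor_ex ((t - t0) / W) ltac:(apply Rdiv_le_0_compat; lra)) as [q [Hq1 Hq2]].
  destruct (Hcontr t0 _ _ (Rle_refl _) Hb0 q) as (m' & M' & H1 & H2 & H3 & H4).
  assert (HqW : t0 + INR q * W <= t).
  { apply (Rmult_le_compat_r W) in Hq1; [|lra]. unfold Rdiv in Hq1.
    rewrite Rmult_assoc, Rinv_l in Hq1 by lra. lra. }
  assert (Hwidth : m' <= M') by (destruct (H4 t HqW j1 Hj1); lra).
  assert (Hnow := dist_E_le_width n (x t) m' M' Hwidth (H4 t HqW)).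
  assert (Hstart := width_le_dist_E n (x t0) j1 j2 Hj1 Hj2).
  assert (Hpow : (1 - g) ^ q <= exp g * exp (- (g / W) * (t - t0))).
  { apply (Rle_trans _ (exp (- g) ^ q)).
    - apply pow_incr. split; [lra|]. assert (Hexp := exp_ineq1_le (- g)). lra.
    - rewrite exp_pow_INR, <- exp_plus. apply exp_le_exp.
      assert (g / W * (t - t0) = g * ((t - t0) / W)) by (unfold Rdiv; ring).
      assert (g * ((t - t0) / W) <= g * (INR q + 1)) by (apply Rmult_le_compat_l; lra).
      nra. }
  assert (0 <= sqrt (INR n)) by apply sqrt_pos.
  assert (0 <= (1 - g) ^ q) by (apply pow_le; lra).
  assert (M' - m' <= exp g * exp (- (g / W) * (t - t0)) * (2 * dist_E n (x t0)))
    by (eapply Rle_trans; [apply H3|apply Rmult_le_compat; lra]).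
  eapply Rle_trans; [apply Hnow|].
  replace (2 * sqrt (INR n) * exp g * exp (- (g / W) * (t - t0)) * dist_E n (x t0)) with
    (sqrt (INR n) * (exp g * exp (- (g / W) * (t - t0)) * (2 * dist_E n (x t0)))) by ring.
  apply Rmult_le_compat_l; lra.
Qed.

Lemma exists_lift_rate delta C : 0 < delta -> 0 <= C ->
  exists r, 0 < r /\ r <= 1 / 2 /\ r <= delta / 2 /\ r * (delta + C) <= delta / 2.
Proof.
  intros Hd HC. set (D := 1 + delta + C).
  exists (delta / (2 * D)).
  assert (Hr : delta / (2 * D) * (2 * D) = delta) by (field; unfold D; lra).
  assert (0 < delta / (2 * D)) by (apply Rdiv_lt_0_compat; unfold D; lra).
  unfold D in *. repeat split; nra.
Qed.

Theorem theorem1 (n : nat) (A : R -> nat -> nat -> R)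
  (Hbdd : bounded_mat n A)
  (Hpc : piecewise_continuous n A)
  (HM : forall t, metzler_zero_row_sums n (A t))
  (k : nat) (Hk : (k < n)%nat) (delta T : R) (Hdelta : 0 < delta) (HT : 0 < T)
  (Hreach : forall t : R, forall l, (l < n)%nat -> l <> k ->
       reachable n delta (int_mat A t T) k l) :
  unif_exp_stable_E n A /\
  (forall (t0 : R) (zeta : R -> nat -> R), is_solution_from n A t0 zeta ->
     exists v : R, forall i, (i < n)%nat ->
       filterlim (fun t => zeta t i) (Rbar_locally p_infty) (locally v)).
Proof.
  destruct Hbdd as [L HL].
  assert (HL0 : 0 <= L) by (specialize (HL 0 k k Hk Hk); pose proof (Rabs_pos (A 0 k k)); lra).
  assert (Hn : (0 < n)%nat) by lia.
  assert (Hc : 0 <= INR n * L * T) by (apply Rmult_le_pos; [apply rate_ge0|]; lra).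
  destruct (exists_window_decay n A L HL0 HL HM T) as [theta [Htheta Hdecay]].
  destruct (exists_lift_rate delta (INR n * L * T) Hdelta Hc) as (r & Hr & Hr1 & Hr2 & Hr3).
  set (g := (r * theta ^ 2) ^ n / 2). set (W := INR n * T).
  assert (Hg : 0 < g <= 1).
  { assert (0 < r * theta ^ 2 <= 1)
      by (split; [apply Rmult_lt_0_compat; [|apply pow_lt]|]; nra).
    assert (0 < (r * theta ^ 2) ^ n <= 1) by (split; [apply pow_lt|apply pow_le_1]; lra).
    unfold g. lra. }
  assert (HW : 0 < W) by (apply Rmult_lt_0_compat; [apply lt_0_INR|]; auto).
  assert (Hcontr : forall t0 zeta, is_solution_from n A t0 zeta ->
    range_contracts n zeta t0 g W)
    by exact (solution_range_contracts n A L HL0 HL HM k delta T theta r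
                Hpc Hk HT Htheta Hdecay Hr Hr1 Hr2 Hr3 Hreach).
  split.
  - exists (2 * sqrt (INR n) * exp g), (g / W).
    assert (0 < sqrt (INR n)) by (apply sqrt_lt_R0, lt_0_INR; auto).
    split; [assert (0 < exp g) by apply exp_pos; nra|].
    split; [apply Rdiv_lt_0_compat; lra|].
    intros t0 zeta Hz. apply range_contracts_exp_decay; auto.
  - intros t0 zeta Hz. apply (range_contracts_converges n zeta t0 g W); auto.
Qed.
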